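(* Let $f:2^V\to\mathbb{Z}_{\ge0}$ be a connectivity function, $W\subseteq V$, and $(C_1,C_2,C_3)$ a minimum $W$-improvement of arity 3. Then for every $i\in\{1,2,3\}$, $W$ directly orients $C_i$.
   Context: A connectivity function $f:2^V\to\mathbb{Z}_{\ge0}$ ($V$ finite) satisfies $f(\emptyset)=0$, $f(X)=f(V\setminus X)$, and $f(X\cup Y)+f(X\cap Y)\le f(X)+f(Y)$. Write $\overline{X}=V\setminus X$. $W$ directly orients $C$ if $f(C\cap W)<f(\overline{C}\cap W)$ and $f(C\cap\overline{W})<f(\overline{C}\cap\overline{W})$. For $W\subseteq V$, a $W$-improvement is a tripartition $(C_1,C_2,C_3)$ of $V$ (pairwise disjoint, possibly empty, union $V$) with $f(C_i)<f(W)/2$, $f(C_i\cap W)<f(W)$, $f(C_i\cap\overline{W})<f(W)$ for each $i$. Its width is $\max_i f(C_i)$, its sum-width is $\sum_i f(C_i)$, and its arity is the number of nonempty $C_i$. A $W$-improvement is minimum if it has minimum width among all $W$-improvements, subject to that minimum arity, and subject to those minimum sum-width. *)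

From mathcomp Require Import all_boot.
Set Implicit Arguments. Unset Strict Implicit. Unset Printing Implicit Defensive.

Definition connectivity (V : finType) (f : {set V} -> nat) : Prop :=
  [/\ f set0 = 0,
      forall X : {set V}, f X = f (~: X)
    & forall X Y : {set V}, f (X :|: Y) + f (X :&: Y) <= f X + f Y].

Definition directly_orients (V : finType) (f : {set V} -> nat) (W C : {set V}) : Prop :=
  f (C :&: W) < f (~: C :&: W) /\ f (C :&: ~: W) < f (~: C :&: ~: W).

(* (C1,C2,C3) is a tripartition of V: pairwise disjoint, union V (parts may be empty) *)
Definition tripartition (V : finType) (C1 C2 C3 : {set V}) : Prop :=
  [/\ [disjoint C1 & C2], [disjoint C1 & C3], [disjoint C2 & C3]
    & C1 :|: C2 :|: C3 = setT].

(* f(C) < f(W)/2 is written 2 * f C < f W (exact, no rounding). *)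
Definition improvement_part (V : finType) (f : {set V} -> nat) (W C : {set V}) : Prop :=
  [/\ 2 * f C < f W, f (C :&: W) < f W & f (C :&: ~: W) < f W].

Definition W_improvement (V : finType) (f : {set V} -> nat) (W C1 C2 C3 : {set V}) : Prop :=
  [/\ tripartition C1 C2 C3, improvement_part f W C1,
      improvement_part f W C2 & improvement_part f W C3].

Definition width (V : finType) (f : {set V} -> nat) (C1 C2 C3 : {set V}) : nat :=
  maxn (f C1) (maxn (f C2) (f C3)).

Definition sum_width (V : finType) (f : {set V} -> nat) (C1 C2 C3 : {set V}) : nat :=
  f C1 + f C2 + f C3.

Definition arity (V : finType) (C1 C2 C3 : {set V}) : nat :=
  (C1 != set0) + (C2 != set0) + (C3 != set0).

Definition min_W_improvement (V : finType) (f : {set V} -> nat) (W C1 C2 C3 : {set V}) : Prop :=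
  W_improvement f W C1 C2 C3 /\
  forall D1 D2 D3 : {set V}, W_improvement f W D1 D2 D3 ->
    width f C1 C2 C3 < width f D1 D2 D3 \/
    (width f C1 C2 C3 = width f D1 D2 D3 /\
      (arity C1 C2 C3 < arity D1 D2 D3 \/
       (arity C1 C2 C3 = arity D1 D2 D3 /\
        sum_width f C1 C2 C3 <= sum_width f D1 D2 D3))).

(* If some part C of a minimum 3-ary W-improvement did not satisfy
   f(W) <= f(~C :&: W) or f(W) <= f(~C :&: ~W), then (C, ~C, empty) would be a
   W-improvement of no larger width and smaller arity, since f(~C) = f(C).
   Either inequality, together with submodularity and f(C) < f(W)/2, forces
   W to orient C. *)

From mathcomp Require Import all_boot.
From mathcomp Require Import zify.
Set Implicit Arguments. Unset Strict Implicit.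

Section Connectivity.

Variables (V : finType) (f : {set V} -> nat).
Hypothesis f_conn : connectivity f.

Lemma conn_set0 : f set0 = 0.
Proof. by case: f_conn. Qed.

Lemma conn_setC (X : {set V}) : f (~: X) = f X.
Proof. by case: f_conn => _ fC _; rewrite -fC. Qed.

Lemma conn_submod (X Y : {set V}) : f (X :|: Y) + f (X :&: Y) <= f X + f Y.
Proof. by case: f_conn. Qed.

Lemma conn_setI_setCI_le (X Y : {set V}) :
  f (X :&: Y) + f (~: X :&: ~: Y) <= f X + f Y.
Proof. by rewrite -setCU conn_setC addnC conn_submod. Qed.

Lemma conn_le_split (X Y : {set V}) : f Y <= f (X :&: Y) + f (~: X :&: Y).
Proof.
have := conn_submod (X :&: Y) (~: X :&: Y).
by rewrite -setIUl setUCr setTI setIACA setICr set0I conn_set0 addn0.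
Qed.

Lemma directly_orients_complement_large (W C : {set V}) :
  improvement_part f W C ->
  f W <= f (~: C :&: W) \/ f W <= f (~: C :&: ~: W) ->
  directly_orients f W C.
Proof.
case=> fC_half fCW fCWc large.
have subW := conn_setI_setCI_le C W.
have subWc := conn_setI_setCI_le C (~: W).
have splitW := conn_le_split C W.
have splitWc := conn_le_split C (~: W).
rewrite setCK conn_setC in subWc splitWc.
rewrite /directly_orients; lia.
Qed.

Lemma improvement_bipartition (W C : {set V}) :
  improvement_part f W C ->
  f (~: C :&: W) < f W -> f (~: C :&: ~: W) < f W ->
  W_improvement f W C (~: C) set0.
Proof.
move=> impC fCcW fCcWc; have [fC_half _ _] := impC; split.
- by split; rewrite ?disjoints_subset ?setCK ?setC0 ?subsetT // setU0 setUCr.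
- exact: impC.
- by split; rewrite ?conn_setC.
- by split; rewrite ?set0I conn_set0 //; lia.
Qed.

Lemma width_bipartition (C : {set V}) : width f C (~: C) set0 = f C.
Proof. by rewrite /width conn_setC conn_set0 maxn0 maxnn. Qed.

End Connectivity.

Lemma arity_bipartition (V : finType) (C : {set V}) :
  C != set0 -> ~: C != set0 -> arity C (~: C) set0 = 2.
Proof. by rewrite /arity eqxx => -> ->. Qed.

Lemma arity3_neq0 (V : finType) (C1 C2 C3 : {set V}) :
  arity C1 C2 C3 = 3 -> [/\ C1 != set0, C2 != set0 & C3 != set0].
Proof. by rewrite /arity; do 3 case: (_ != set0). Qed.

Lemma setC_neq0_disjoint (V : finType) (A B : {set V}) :
  [disjoint A & B] -> B != set0 -> ~: A != set0.
Proof. by rewrite disjoint_sym disjoints_subset => /subset_neq0. Qed.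

Lemma min_improvement_complement_large (V : finType) (f : {set V} -> nat)
    (W C1 C2 C3 C : {set V}) :
  connectivity f -> min_W_improvement f W C1 C2 C3 -> 2 < arity C1 C2 C3 ->
  C != set0 -> ~: C != set0 -> improvement_part f W C ->
  f C <= width f C1 C2 C3 ->
  f W <= f (~: C :&: W) \/ f W <= f (~: C :&: ~: W).
Proof.
move=> f_conn [_ minC] ar_gt2 C_neq0 Cc_neq0 impC fC_le.
have [small_W | ] := ltnP (f (~: C :&: W)) (f W); last by left.
have [small_Wc | ] := ltnP (f (~: C :&: ~: W)) (f W); last by right.
have := minC _ _ _ (improvement_bipartition f_conn impC small_W small_Wc).
rewrite width_bipartition // arity_bipartition //; lia.
Qed.

Lemma min_improvement_orients (V : finType) (f : {set V} -> nat)
    (W C1 C2 C3 C : {set V}) :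
  connectivity f -> min_W_improvement f W C1 C2 C3 -> 2 < arity C1 C2 C3 ->
  C != set0 -> ~: C != set0 -> improvement_part f W C ->
  f C <= width f C1 C2 C3 ->
  directly_orients f W C.
Proof.
move=> f_conn minC ar_gt2 C_neq0 Cc_neq0 impC fC_le.
apply: directly_orients_complement_large => //.
exact: min_improvement_complement_large minC ar_gt2 C_neq0 Cc_neq0 impC fC_le.
Qed.

Theorem lemma7 (V : finType) (f : {set V} -> nat) (W C1 C2 C3 : {set V}) :
  connectivity f ->
  min_W_improvement f W C1 C2 C3 ->
  arity C1 C2 C3 = 3 ->
  [/\ directly_orients f W C1, directly_orients f W C2 & directly_orients f W C3].
Proof.
move=> f_conn minC ar3.
have [[[d12 d13 _ _] imp1 imp2 imp3] _] := minC.
have [n1 n2 n3] := arity3_neq0 ar3.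
have [w1 w2 w3] : [/\ f C1 <= width f C1 C2 C3, f C2 <= width f C1 C2 C3
                     & f C3 <= width f C1 C2 C3] by rewrite /width; split; lia.
split; apply: (min_improvement_orients f_conn minC) => //; rewrite ?ar3 //.
- exact: setC_neq0_disjoint d12 n2.
- by apply: setC_neq0_disjoint n1; rewrite disjoint_sym.
- by apply: setC_neq0_disjoint n1; rewrite disjoint_sym.
Qed.
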